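(* Let $G$ be a finite solvable group having exactly one normal subgroup other than $1$ and $G$. Then $G$ is not $\psi$-normal divisible.
   Context: For a finite group $G$, $\psi(G)=\sum_{x\in G} o(x)$ denotes the sum of the orders of all elements of $G$. A finite group $G$ is called $\psi$-normal divisible if $\psi(H)$ divides $\psi(G)$ for every normal subgroup $H$ of $G$. *)

From mathcomp Require Import all_boot all_fingroup all_solvable.
Set Implicit Arguments. Unset Strict Implicit. Unset Printing Implicit Defensive.
Local Open Scope group_scope.

Definition psi (gT : finGroupType) (A : {set gT}) : nat := (\sum_(x in A) #[x])%N.

Definition psi_normal_divisible (gT : finGroupType) (G : {group gT}) : Prop :=
  forall H : {group gT}, H <| G -> (psi H %| psi G)%N.

From mathcomp Require Import all_boot all_fingroup all_solvable.
From mathcomp Require Import zify.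
Set Implicit Arguments. Unset Strict Implicit. Unset Printing Implicit Defensive.

(* The unique nontrivial proper normal subgroup N is minimal normal, hence an
   elementary abelian p-group, and G/N is simple and solvable, so |G : N| = q is
   prime.  If G is abelian, all subgroups are normal, which forces G to be cyclic
   of order p^2.  Otherwise, for x outside N, C_N(x) is normalised by N<x> = G,
   hence trivial; so every such x has order q, and counting the fixed points of
   <x> acting on N gives q | |N| - 1.  In both cases
   psi(G) = psi(N) + (|G| - |N|) m with m the common order of the elements
   outside N, and psi(N) = 1 + (|N| - 1) p is coprime to |G| but exceeds the
   remaining factor of (|G| - |N|) m (p - 1 or q - 1). *)

Section Arithmetic.
Local Open Scope nat_scope.

Lemma coprime_1addM a b : coprime (1 + a * b) b.
Proof. by rewrite coprime_sym /coprime addnC gcdnMDl gcdn1. Qed.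

Lemma coprime_dvdn_eq1 s m : coprime s m -> s %| m -> s = 1.
Proof. by rewrite /coprime => /eqP co /gcdn_idPl; rewrite co. Qed.

Lemma psi_cyclic_p2_ndvd p : prime p ->
  ~~ (1 + (p - 1) * p %| 1 + (p - 1) * p + (p * p - p) * (p * p)).
Proof.
move=> p_pr; have p_gt1 := prime_gt1 p_pr.
set s := 1 + (p - 1) * p; rewrite dvdn_addr //.
have -> : (p * p - p) * (p * p) = (p - 1) * p * (p * p) by nia.
have co_s : coprime s ((p - 1) * p * (p * p)).
  by rewrite !coprimeMr coprime_1addM /s mulnC coprime_1addM.
by apply/negP=> /(coprime_dvdn_eq1 co_s); rewrite /s; nia.
Qed.

Lemma psi_frobenius_ndvd p k q : prime p -> prime q -> 0 < k -> q %| p ^ k - 1 ->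
  ~~ (1 + (p ^ k - 1) * p %| 1 + (p ^ k - 1) * p + (p ^ k * q - p ^ k) * q).
Proof.
move=> p_pr q_pr k_gt0 q_dvd.
have p_gt1 := prime_gt1 p_pr; have q_gt1 := prime_gt1 q_pr.
have p_le_n : p <= p ^ k by rewrite -{1}(expn1 p) leq_pexp2l // ltnW.
move: q_dvd p_le_n; set n := p ^ k => q_dvd p_le_n.
set s := 1 + (n - 1) * p; rewrite dvdn_addr //.
have -> : (n * q - n) * q = n * q * (q - 1) by nia.
have co_s : coprime s (n * q).
  have [c n1E] := dvdnP q_dvd.
  rewrite coprimeMr /n coprimeXr /s -/n n1E ?coprime_1addM //.
  by rewrite mulnAC coprime_1addM.
have n1_gt0 : 0 < n - 1 by rewrite subn_gt0 (leq_trans p_gt1).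
have q_le_n1 := dvdn_leq n1_gt0 q_dvd.
rewrite Gauss_dvdr //; apply/negP=> /dvdn_leq; rewrite subn_gt0 => /(_ q_gt1).
rewrite /s; nia.
Qed.

End Arithmetic.

Local Open Scope group_scope.

Lemma psi_abelem (gT : finGroupType) p (N : {group gT}) :
  p.-abelem N -> psi N = (1 + (#|N| - 1) * p)%N.
Proof.
move=> abelN; rewrite /psi (big_setD1 1) //= order1; congr (1 + _)%N.
rewrite (eq_bigr (fun _ => p)); last first.
  by move=> x /setD1P[ntx Nx]; rewrite (abelem_order_p abelN).
by rewrite sum_nat_const (cardsD1 1 N) group1 add1n subSS subn0.
Qed.

Lemma psi_const_order_setD (gT : finGroupType) (G N : {group gT}) m :
  N \subset G -> {in G :\: N, forall x, #[x] = m} ->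
  psi G = (psi N + (#|G| - #|N|) * m)%N.
Proof.
move=> sNG oGN; rewrite /psi (big_setID N) (setIidPr sNG) /=; congr (_ + _)%N.
by rewrite (eq_bigr (fun _ => m)) // sum_nat_const cardsD (setIidPr sNG).
Qed.

Lemma prime_index_mulg (gT : finGroupType) (G H K : {group gT}) :
  H <| G -> prime #|G : H| -> K \subset G -> ~~ (K \subset H) -> H * K = G.
Proof.
move=> /andP[sHG nHG] iH_pr sKG not_sKH.
have sHJ : H \subset H <*> K := joing_subl H K.
have sJG : H <*> K \subset G by rewrite join_subG sHG.
have iHJ : #|H <*> K : H| = #|G : H|.
  apply/(prime_nt_dvdP iH_pr); last exact: indexSg.
  rewrite gtn_eqF // indexg_gt1.
  by apply: contra not_sKH; apply: subset_trans (joing_subr H K).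
rewrite -norm_joinEr ?(subset_trans sKG nHG) //; apply: index1g => //.
apply/eqP; rewrite -(eqn_pmul2r (prime_gt0 iH_pr)) mul1n -{1}iHJ.
by rewrite Lagrange_index.
Qed.

Lemma expg_index_normal (gT : finGroupType) (G H : {group gT}) x :
  H <| G -> x \in G -> x ^+ #|G : H| \in H.
Proof.
move=> nHG Gx; have nHx := subsetP (normal_norm nHG) x Gx.
apply: coset_idr; first by rewrite groupX.
by rewrite morphX //= -card_quotient ?normal_norm // expg_cardG ?mem_quotient.
Qed.

Section UniqueNontrivialNormal.

Variables (gT : finGroupType) (G N : {group gT}).
Hypotheses (solG : solvable G) (nNG : N <| G) (ntN : N :!=: 1) (neNG : N :!=: G).
Hypothesis normal_cases :
  forall M : {group gT}, M <| G -> [\/ M :=: 1, M :=: G | M :=: N].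

Let sNG : N \subset G := normal_sub nNG.

Lemma minnormal_N : minnormal N G.
Proof.
apply/mingroupP; split=> [|M /andP[ntM nMG] sMN].
  by rewrite ntN normal_norm.
have nMG' : M <| G by rewrite /normal nMG (subset_trans sMN sNG).
case/normal_cases: nMG' => [M1 | MG | //]; first by rewrite M1 eqxx in ntM.
by case/negP: neNG; rewrite eqEsubset sNG -MG sMN.
Qed.

Lemma abelem_N : exists2 p, prime p & p.-abelem N.
Proof.
have [_ _ abelN] := minnormal_solvable minnormal_N sNG solG.
exact/is_abelemP.
Qed.

Lemma prime_index_N : prime #|G : N|.
Proof.
rewrite -card_quotient ?normal_norm //.
apply: simple_sol_prime; first exact: quotient_sol.
rewrite quotient_simple //; apply/maxgroupP; split.
  by rewrite normal_norm // andbT properEneq neNG sNG.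
move=> M /andP[pMG nMG] sNM.
have nMG' : M <| G by rewrite /normal nMG proper_sub.
case/normal_cases: nMG' => // [M1 | MG].
  by move: ntN; rewrite -subG1 -M1 sNM.
by rewrite MG properE subxx in pMG.
Qed.

Lemma center_N_abelian : N \subset 'Z(G) -> abelian G.
Proof.
move=> sNZ; case/normal_cases: (center_normal G) => [Z1 | ZG | ZN].
- by move: ntN; rewrite -subG1 -Z1 sNZ.
- exact/center_idP.
- apply: cyclic_center_factor_abelian; apply: prime_cyclic.
  by rewrite ZN card_quotient ?normal_norm // prime_index_N.
Qed.

Lemma mulg_N_cycle x : x \in G :\: N -> N * <[x]> = G.
Proof.
case/setDP=> Gx nNx.
by apply: prime_index_mulg prime_index_N _ _; rewrite ?cycle_subG.
Qed.

Section Prime.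

Variable p : nat.
Hypotheses (p_pr : prime p) (abelN : p.-abelem N).

Section AbelianCase.

Hypothesis abG : abelian G.

Lemma cycle_normal_abelian x : x \in G -> <[x]> <| G.
Proof. by move=> Gx; rewrite -sub_abelian_normal ?cycle_subG. Qed.

Lemma card_N_abelian : #|N| = p.
Proof.
have [y Ny nty] := trivgPn _ ntN; have Gy := subsetP sNG y Ny.
rewrite -(abelem_order_p abelN Ny nty) orderE.
case/normal_cases: (cycle_normal_abelian Gy) => [y1 | yG | -> //].
  by case/negP: nty; rewrite -cycle_eq1 y1.
by case/negP: neNG; rewrite eqEsubset sNG -yG cycle_subG.
Qed.

Lemma index_N_abelian : #|G : N| = p.
Proof.
have q_pr := prime_index_N.
have [y Gy oy] : {y | y \in G & #[y] = #|G : N|}.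
  by apply: Cauchy => //; rewrite -(Lagrange sNG) dvdn_mull.
rewrite -oy orderE.
case/normal_cases: (cycle_normal_abelian Gy) => [y1 | yG | ->].
- by move: q_pr; rewrite -oy orderE y1 cards1.
- move: oy; rewrite orderE yG -(Lagrange sNG) card_N_abelian => /eqP.
  rewrite -{2}(mul1n #|G : N|) eqn_pmul2r ?prime_gt0 // => /eqP p1.
  by move: p_pr; rewrite p1.
- exact: card_N_abelian.
Qed.

Lemma order_setD_N_abelian x : x \in G :\: N -> #[x] = #|G|.
Proof.
case/setDP=> Gx nNx; rewrite orderE.
case/normal_cases: (cycle_normal_abelian Gx) => [x1 | -> // | xN].
  by case/negP: nNx; move/eqP: x1; rewrite cycle_eq1 => /eqP->.
by case/negP: nNx; rewrite -xN cycle_id.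
Qed.

End AbelianCase.

Section NonabelianCase.

Hypothesis nabG : ~~ abelian G.

Lemma cent_cycle_N x : x \in G :\: N -> 'C_N(<[x]>) = 1.
Proof.
move=> GNx; have defG := mulg_N_cycle GNx; have [Gx _] := setDP GNx.
have cNN := abelem_abelian abelN.
have nCG : 'C_N(<[x]>) <| G.
  rewrite /normal (subset_trans (subsetIl _ _) sNG) -defG mulG_subG.
  rewrite sub_abelian_norm ?subsetIl //= normsI ?norms_cent ?normG //.
  by rewrite (subset_trans _ (normal_norm nNG)) ?cycle_subG.
case/normal_cases: nCG => [// | CG | CN].
  by case/negP: neNG; rewrite eqEsubset sNG -CG subsetIl.
case/negP: nabG; apply: center_N_abelian.
rewrite subsetI sNG centsC -defG mulG_subG [N \subset _]cNN centsC /=.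
by have := subsetIr N 'C(<[x]>); rewrite CN.
Qed.

Lemma order_setD_N x : x \in G :\: N -> #[x] = #|G : N|.
Proof.
move=> GNx; have [Gx nNx] := setDP GNx.
have xq1 : x ^+ #|G : N| = 1.
  apply/set1gP; rewrite -(cent_cycle_N GNx) inE expg_index_normal //= cent_cycle.
  by apply/cent1P; apply/commute_sym/commuteX.
apply/(prime_nt_dvdP prime_index_N); last by rewrite order_dvdn xq1.
by rewrite order_eq1; apply: contraNneq nNx => ->.
Qed.

Lemma index_N_dvd : #|G : N| %| #|N| - 1.
Proof.
have /properP[_ [x Gx nNx]] : N \proper G by rewrite properEneq neNG.
have GNx : x \in G :\: N by rewrite inE nNx.
have fix1 : 'Fix_(N | 'J)(<[x]>) = 1 by rewrite -(cent_cycle_N GNx) afixJ.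
have qx : #|G : N|.-group <[x]>.
  by rewrite /pgroup -orderE (order_setD_N GNx) pnat_id ?prime_index_N.
have actsJ : [acts <[x]>, on N | 'J].
  by rewrite astabsJ (subset_trans _ (normal_norm nNG)) ?cycle_subG.
have := pgroup_fix_mod qx actsJ; rewrite fix1 cards1 => /eqP.
by rewrite eqn_mod_dvd ?cardG_gt0.
Qed.

End NonabelianCase.

Lemma psi_N_ndvd_psi_G_abelem : ~~ (psi N %| psi G).
Proof.
have [abG | nabG] := boolP (abelian G).
  rewrite (psi_const_order_setD sNG (order_setD_N_abelian abG)).
  rewrite (psi_abelem abelN).
  rewrite -(Lagrange sNG) card_N_abelian // index_N_abelian //.
  exact: psi_cyclic_p2_ndvd.
have [_ _ [k cardN]] := pgroup_pdiv (abelem_pgroup abelN) ntN.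
rewrite (psi_const_order_setD sNG (order_setD_N nabG)) (psi_abelem abelN).
rewrite -(Lagrange sNG) cardN.
apply: psi_frobenius_ndvd => //; first exact: prime_index_N.
by rewrite -cardN index_N_dvd.
Qed.

End Prime.

Lemma psi_N_ndvd_psi_G : ~~ (psi N %| psi G).
Proof.
by have [p p_pr abelN] := abelem_N; apply: psi_N_ndvd_psi_G_abelem abelN.
Qed.

End UniqueNontrivialNormal.

Theorem proposition3p2 (gT : finGroupType) (G : {group gT}) :
  solvable G ->
  (exists N : {group gT},
      [/\ N <| G, N :!=: 1, N :!=: G &
          forall M : {group gT}, M <| G -> [\/ M :=: 1, M :=: G | M :=: N]]) ->
  ~ psi_normal_divisible G.
Proof.
move=> solG [N [nNG ntN neNG normal_cases]] psi_div.
by case/negP: (psi_N_ndvd_psi_G solG nNG ntN neNG normal_cases); apply: psi_div.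
Qed.
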